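(* Assume the system is IFS$_m$, with a controller $\Psi$ of kind (2) whose closed loop satisfies $\|\phi(k,\sigma,x_0,\Psi)\|\le C\gamma^k\|x_0\|$ for all $x_0,\sigma,k$, where $C>1$, $\gamma\in[0,1)$. Define $V:\mathbb{R}^n\to\mathbb{R}$ by $$V(x_0)=\inf_{\Psi'\in\mathcal{C}_m}\ \sup_{\sigma\in\Sigma^\omega}\ \sum_{k=0}^{\infty}\|\phi(k,\sigma,x_0,\Psi')\|,$$ where $\mathcal{C}_m$ is the set of all functions $\mathcal{H}_-\to\mathbb{R}^m$. Then $\|x_0\|\le V(x_0)\le \frac{C}{1-\gamma}\|x_0\|$ for all $x_0\in\mathbb{R}^n$, and $V$ is a norm on $\mathbb{R}^n$ (positive definite, absolutely homogeneous of degree 1, i.e. $V(\lambda x)=|\lambda|V(x)$ for all $\lambda\in\mathbb{R}$, and subadditive); in particular $V$ is convex and continuous.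
   Context: Let $\Sigma$ be a finite nonempty set and $\{(A_i,B_i)\in\mathbb{R}^{n\times n}\times\mathbb{R}^{n\times m} : i\in\Sigma\}$. Consider $x(k+1)=A_{\sigma(k)}x(k)+B_{\sigma(k)}u(k)$, $k\in\mathbb{N}=\{0,1,\dots\}$, with arbitrary switching signal $\sigma:\mathbb{N}\to\Sigma$ (set of all such: $\Sigma^\omega$). $\|\cdot\|$ is the Euclidean norm. $\mathcal{H}_-$ is the set of all tuples $(x_k,\dots,x_0;\,i_{k-1},\dots,i_0)$ with $k\in\mathbb{N}$, $x_j\in\mathbb{R}^n$, $i_j\in\Sigma$ (mode string empty when $k=0$). For a function $\Psi:\mathcal{H}_-\to\mathbb{R}^m$ (a current-mode-independent controller with memory), $\phi(k,\sigma,x_0,\Psi)$ denotes the closed-loop trajectory defined by $x(0)=x_0$ and $x(k+1)=A_{\sigma(k)}x(k)+B_{\sigma(k)}\Psi(x(k),\dots,x(0);\,\sigma(k-1),\dots,\sigma(0))$. The system is IFS$_m$ if there exists such $\Psi$ and constants $M>0,\gamma\in[0,1)$ with $\|\phi(k,\sigma,x_0,\Psi)\|\le M\gamma^k\|x_0\|$ for all $x_0\in\mathbb{R}^n,\sigma\in\Sigma^\omega,k\in\mathbb{N}$. *)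

From HB Require Import structures.
From mathcomp Require Import all_boot all_order all_algebra.
From mathcomp Require Import all_classical all_reals all_analysis.
Set Implicit Arguments. Unset Strict Implicit. Unset Printing Implicit Defensive.
Import Order.TTheory GRing.Theory Num.Theory.
Import numFieldNormedType.Exports.
Local Open Scope classical_set_scope.
Local Open Scope ring_scope.

Section SwitchedDefs.
Variables (R : realType) (Sig : finType) (n m : nat).

Definition enorm (x : 'cV[R]_n) : R := Num.sqrt (\sum_(i < n) (x i 0) ^+ 2).

(* An element of H_- : (x_k,...,x_0 ; i_{k-1},...,i_0), stored time-indexed:
   the first function maps j (0 <= j <= k) to x_j, the second maps
   j (0 <= j < k) to i_j. *)
Definition history : Type :=
  {k : nat & (('I_k.+1 -> 'cV[R]_n) * ('I_k -> Sig))%type}.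

(* current-mode-independent controllers with memory: C_m = all maps H_- -> R^m *)
Definition controller : Type := history -> 'cV[R]_m.

Variables (A : Sig -> 'M[R]_n) (B : Sig -> 'M[R]_(n, m)).

Definition hist_of (sigma : nat -> Sig) (k : nat) (s : seq 'cV[R]_n) : history :=
  existT _ k ((fun j : 'I_k.+1 => nth 0 s (k - j)%N),
              (fun j : 'I_k => sigma (nat_of_ord j))).

(* trajs k = [x(k); x(k-1); ...; x(0)] of the closed loop *)
Fixpoint trajs (Psi : controller) (sigma : nat -> Sig) (x0 : 'cV[R]_n) (k : nat)
  : seq 'cV[R]_n :=
  match k with
  | 0 => [:: x0]
  | k'.+1 =>
      let s := trajs Psi sigma x0 k' in
      (A (sigma k') *m head 0 s + B (sigma k') *m Psi (hist_of sigma k' s)) :: s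
  end.

Definition phi (k : nat) (sigma : nat -> Sig) (x0 : 'cV[R]_n) (Psi : controller)
  : 'cV[R]_n := head 0 (trajs Psi sigma x0 k).

Definition cost (x0 : 'cV[R]_n) (Psi : controller) (sigma : nat -> Sig) : \bar R :=
  (\sum_(0 <= k <oo) (enorm (phi k sigma x0 Psi))%:E)%E.

Definition Vext (x0 : 'cV[R]_n) : \bar R :=
  ereal_inf (range (fun Psi : controller => ereal_sup (range (cost x0 Psi)))).

(* real-valued V (finite by the theorem) *)
Definition V (x0 : 'cV[R]_n) : R := fine (Vext x0).

End SwitchedDefs.

(* The heart of the proof is superposition.  The switched system is linear and a
   controller with memory sees the past modes, so it can replay the closed loops
   of two controllers Psi1, Psi2 started at x1, x2 and apply a1 Psi1 + a2 Psi2;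
   from a1 x1 + a2 x2 the state is then a1 phi1 + a2 phi2 for every switching
   signal.  With near-optimal Psi1, Psi2 this gives
   V (a1 x1 + a2 x2) <= |a1| V x1 + |a2| V x2, hence homogeneity, subadditivity
   and convexity.  The k = 0 term of the cost gives |x| <= V x, the given
   controller gives V x <= C / (1 - gamma) |x| by summing the geometric bound,
   and a subadditive function dominated by a norm is Lipschitz. *)

From HB Require Import structures.
From mathcomp Require Import all_boot all_order all_algebra.
From mathcomp Require Import all_classical all_reals all_analysis.
From mathcomp Require Import ring lra.
Import Order.TTheory GRing.Theory Num.Theory.
Import numFieldNormedType.Exports.
Local Open Scope classical_set_scope.
Local Open Scope ring_scope.

Lemma cauchy_schwarz_sum (R : realFieldType) (I : finType) (a b : I -> R) :
  (\sum_i a i * b i) ^+ 2 <= (\sum_i a i ^+ 2) * (\sum_i b i ^+ 2).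
Proof.
set A := \sum_i a i ^+ 2; set Bs := \sum_i b i ^+ 2; set D := \sum_i a i * b i.
have B0 : 0 <= Bs by apply: sumr_ge0 => i _; exact: sqr_ge0.
have [Bs0|Bs_neq0] := eqVneq Bs 0.
  have b0 i : b i = 0.
    apply/eqP; rewrite -sqrf_eq0; apply/eqP.
    move/eqP: Bs0; rewrite psumr_eq0; last by move=> j _; exact: sqr_ge0.
    by move/allP => /(_ i (mem_index_enum _)) /eqP.
  by rewrite /D big1 ?expr0n ?Bs0 ?mulr0 // => i _; rewrite b0 mulr0.
have Bs_gt0 : 0 < Bs by rewrite lt_def Bs_neq0 B0.
have : 0 <= \sum_i (Bs * a i - D * b i) ^+ 2 by apply: sumr_ge0 => i _; exact: sqr_ge0.
have -> : \sum_i (Bs * a i - D * b i) ^+ 2 = Bs * (A * Bs - D ^+ 2).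
  rewrite (eq_bigr (fun i =>
    Bs ^+ 2 * a i ^+ 2 + (- (2 * Bs * D)) * (a i * b i) + D ^+ 2 * b i ^+ 2));
    last by move=> i _; ring.
  rewrite !big_split /= -!mulr_sumr -/A -/Bs -/D; ring.
by rewrite pmulr_rge0 // subr_ge0.
Qed.

Section EuclideanNorm.
Variables (R : realType) (n : nat).
Implicit Types (x y : 'cV[R]_n) (l : R).

Lemma enorm_ge0 x : 0 <= enorm x.
Proof. exact: sqrtr_ge0. Qed.

Lemma enormZ l x : enorm (l *: x) = `|l| * enorm x.
Proof.
rewrite /enorm (eq_bigr (fun i => l ^+ 2 * x i 0 ^+ 2)); last first.
  by move=> i _; rewrite mxE exprMn.
by rewrite -mulr_sumr sqrtrM ?sqr_ge0 // sqrtr_sqr.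
Qed.

Lemma enormN x : enorm (- x) = enorm x.
Proof. by rewrite -scaleN1r enormZ normrN normr1 mul1r. Qed.

Lemma enorm_gt0 x : x != 0 -> 0 < enorm x.
Proof.
move=> x_neq0; rewrite /enorm sqrtr_gt0.
have [i xi_neq0] : exists i, x i 0 != 0.
  apply/existsP; apply: contraNT x_neq0 => /existsPn x0.
  apply/eqP/matrixP => i j; rewrite mxE ord1.
  by move/negPn/eqP: (x0 i).
rewrite (bigD1 i) //= ltr_pwDl ?sqr_ge0 //; first by rewrite lt_def sqr_ge0 sqrf_eq0 xi_neq0.
by apply: sumr_ge0 => k _; exact: sqr_ge0.
Qed.

Lemma enormD x y : enorm (x + y) <= enorm x + enorm y.
Proof.
rewrite /enorm.
set a := fun i : 'I_n => x i 0; set b := fun i : 'I_n => y i 0.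
rewrite (eq_bigr (fun i => a i ^+ 2 + 2 * (a i * b i) + b i ^+ 2)); last first.
  by move=> i _; rewrite mxE /a /b; ring.
rewrite !big_split /= -mulr_sumr.
set A := \sum_i a i ^+ 2; set Bs := \sum_i b i ^+ 2; set D := \sum_i a i * b i.
have A0 : 0 <= A by apply: sumr_ge0 => i _; exact: sqr_ge0.
have B0 : 0 <= Bs by apply: sumr_ge0 => i _; exact: sqr_ge0.
have D_le : D <= Num.sqrt A * Num.sqrt Bs.
  rewrite -sqrtrM // (le_trans (ler_norm D)) // -sqrtr_sqr ler_sqrt ?mulr_ge0 //.
  exact: cauchy_schwarz_sum.
have sA := sqrtr_ge0 A; have sB := sqrtr_ge0 Bs.
rewrite -[leRHS]ger0_norm ?addr_ge0 // -sqrtr_sqr ler_sqrt ?sqr_ge0 //.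
rewrite sqrrD !sqr_sqrtr //; lra.
Qed.

Lemma enorm_le_mx_norm x : enorm x <= Num.sqrt n%:R * `|x|.
Proof.
rewrite /enorm -[X in _ <= _ * X]ger0_norm // -sqrtr_sqr -sqrtrM // ler_sqrt; last first.
  by rewrite mulr_ge0 ?sqr_ge0.
have coord_le i : x i 0 ^+ 2 <= `|x| ^+ 2.
  rewrite -real_normK ?num_real // lerXn2r ?nnegrE // [leRHS]mx_normrE.
  exact: (le_bigmax _ (fun ij => `|x ij.1 ij.2|) (i, 0)).
apply: le_trans (ler_sum _ (fun i _ => coord_le i)) _.
by rewrite sumr_const card_ord mulr_natl.
Qed.

End EuclideanNorm.

Arguments enorm_ge0 {R n}.
Arguments enormZ {R n}.
Arguments enormN {R n}.
Arguments enorm_gt0 {R n}.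
Arguments enormD {R n}.
Arguments enorm_le_mx_norm {R n}.

Section SublinearFunction.
Variables (R : numFieldType) (U : lmodType R) (f : U -> R).
Hypothesis f_sublinear :
  forall a b x y, f (a *: x + b *: y) <= `|a| * f x + `|b| * f y.

Lemma sublinear_subadditive x y : f (x + y) <= f x + f y.
Proof. by have := f_sublinear 1 1 x y; rewrite !scale1r normr1 !mul1r. Qed.

Lemma sublinear0 : f 0 = 0.
Proof.
apply/le_anti/andP; split.
  by have := f_sublinear 0 0 0 0; rewrite !scale0r addr0 normr0 !mul0r addr0.
by have := sublinear_subadditive 0 0; rewrite addr0 lerDl.
Qed.

Lemma sublinear_homogeneous l x : f (l *: x) = `|l| * f x.
Proof.
have f_scale_le k z : f (k *: z) <= `|k| * f z.
  by have := f_sublinear k 0 z z; rewrite scale0r addr0 normr0 mul0r addr0.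
have [->|l_neq0] := eqVneq l 0; first by rewrite scale0r normr0 mul0r sublinear0.
apply/le_anti; rewrite f_scale_le /=.
have := f_scale_le l^-1 (l *: x); rewrite scalerA mulVf // scale1r normfV => fx_le.
by rewrite -ler_pdivlMl ?normr_gt0.
Qed.

Lemma sublinear_convex x y t : 0 <= t -> t <= 1 ->
  f (t *: x + (1 - t) *: y) <= t * f x + (1 - t) * f y.
Proof.
move=> t0 t1; have := f_sublinear t (1 - t) x y.
by rewrite !ger0_norm ?subr_ge0.
Qed.

End SublinearFunction.

Arguments sublinear_subadditive {R U f}.
Arguments sublinear0 {R U f}.
Arguments sublinear_homogeneous {R U f}.
Arguments sublinear_convex {R U f}.

Lemma subadditive_dist_le (R : realDomainType) (U : zmodType) (f N : U -> R) :
  (forall x y, f (x + y) <= f x + f y) -> (forall z, f z <= N z) ->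
  (forall z, N (- z) = N z) -> forall x y, `|f x - f y| <= N (x - y).
Proof.
move=> f_sub f_le N_sym x y; rewrite ler_norml; apply/andP; split.
  have := f_sub x (y - x); rewrite addrC subrK.
  have := f_le (y - x); rewrite -opprB N_sym; lra.
have := f_sub y (x - y); rewrite addrC subrK.
have := f_le (x - y); lra.
Qed.

Lemma lipschitz_continuous (R : realFieldType) (U : normedModType R) (f : U -> R) (K : R) :
  0 <= K -> (forall x y, `|f x - f y| <= K * `|x - y|) -> continuous f.
Proof.
move=> K0 f_lip x; apply/cvgrPdist_lt => e e_gt0.
have d_gt0 : 0 < e / (K + 1) by rewrite divr_gt0 // ltr_wpDl.
have := @near_ball _ _ x _ d_gt0; apply: filterS => y; rewrite -ball_normE /= => xy_lt.
apply: le_lt_trans (f_lip x y) _.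
apply: le_lt_trans (_ : _ <= (K + 1) * `|x - y|) _.
  by rewrite ler_wpM2r ?normr_ge0 ?lerDl.
by rewrite -ltr_pdivlMl ?ltr_wpDl // mulrC.
Qed.

Section ClosedLoop.
Variables (R : realType) (Sig : finType) (n m : nat).
Variables (A : Sig -> 'M[R]_n) (B : Sig -> 'M[R]_(n, m)).
Implicit Types (Psi : controller R Sig n m) (sigma : nat -> Sig) (x : 'cV[R]_n).

Lemma phi0 Psi sigma x : phi A B 0 sigma x Psi = x.
Proof. by []. Qed.

Lemma phiS Psi sigma x k :
  phi A B k.+1 sigma x Psi = A (sigma k) *m phi A B k sigma x Psi +
    B (sigma k) *m Psi (hist_of sigma k (trajs A B Psi sigma x k)).
Proof. by []. Qed.

Lemma hist_of_prefix {s1 s2 : nat -> Sig} {k} (s : seq 'cV[R]_n) :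
  (forall j, (j < k)%N -> s1 j = s2 j) -> hist_of s1 k s = hist_of s2 k s.
Proof.
by move=> s12; rewrite /hist_of; congr existT; congr pair; apply: funext => j; apply: s12.
Qed.

Lemma trajs_prefix Psi {s1 s2 : nat -> Sig} x {k} :
  (forall j, (j < k)%N -> s1 j = s2 j) -> trajs A B Psi s1 x k = trajs A B Psi s2 x k.
Proof.
elim: k => [//|k IHk] s12 /=.
have s12' j : (j < k)%N -> s1 j = s2 j by move=> jk; apply: s12; exact: ltnW.
by rewrite IHk // (hist_of_prefix _ s12') s12.
Qed.

(* Only the modes before time [k] matter; [s0] merely makes the signal total. *)
Definition extend_modes (s0 : Sig) {k} (md : 'I_k -> Sig) : nat -> Sig :=
  fun j => if insub j is Some o then md o else s0.

Lemma extend_modesE (s0 : Sig) sigma k j : (j < k)%N ->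
  extend_modes s0 (fun o : 'I_k => sigma o) j = sigma j.
Proof. by move=> jk; rewrite /extend_modes insubT. Qed.

Definition superpose (s0 : Sig) (a1 a2 : R) Psi1 Psi2 (x1 x2 : 'cV[R]_n) :
    controller R Sig n m :=
  fun h => let: existT k (_, md) := h in
    let sigma := extend_modes s0 md in
    a1 *: Psi1 (hist_of sigma k (trajs A B Psi1 sigma x1 k)) +
    a2 *: Psi2 (hist_of sigma k (trajs A B Psi2 sigma x2 k)).

Lemma phi_superpose s0 a1 a2 Psi1 Psi2 x1 x2 sigma k :
  phi A B k sigma (a1 *: x1 + a2 *: x2) (superpose s0 a1 a2 Psi1 Psi2 x1 x2) =
  a1 *: phi A B k sigma x1 Psi1 + a2 *: phi A B k sigma x2 Psi2.
Proof.
elim: k => [//|k IHk]; rewrite !phiS IHk /=.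
have prefix j : (j < k)%N -> extend_modes s0 (fun o : 'I_k => sigma o) j = sigma j.
  exact: extend_modesE.
rewrite !(trajs_prefix _ _ prefix) !(hist_of_prefix _ prefix).
rewrite !mulmxDr -!scalemxAr !scalerDr.
by rewrite -!addrA; congr (_ + _); rewrite addrCA; congr (_ + _); rewrite addrC.
Qed.

End ClosedLoop.

Arguments superpose {R Sig n m}.

Lemma geometric_partial_le (R : realFieldType) (a g : R) N :
  0 <= a -> 0 <= g -> g < 1 -> \sum_(0 <= k < N) a * g ^+ k <= a / (1 - g).
Proof.
move=> a0 g0 g1; have g1_gt0 : 0 < 1 - g by rewrite subr_gt0.
have := congr1 (fun u => u N) (geometric_seriesE a (negbT (lt_eqF g1))).
rewrite seriesEnat /= => ->.
rewrite ler_pM2r ?invr_gt0 // -[leRHS]mulr1; apply: (ler_wpM2l a0).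
by rewrite lerBlDr lerDl exprn_ge0.
Qed.

Lemma nneseries_le_EFin (R : realType) (u : nat -> R) (b : R) :
  (forall k, 0 <= u k) -> (forall N, \sum_(0 <= k < N) u k <= b) ->
  (\sum_(0 <= k <oo) (u k)%:E <= b%:E)%E.
Proof.
move=> u_ge0 u_le; apply: lime_le.
  by apply: is_cvg_nneseries => k _ _; rewrite lee_fin.
by apply: nearW => N; rewrite sumEFin lee_fin.
Qed.

Section ValueFunction.
Variables (R : realType) (Sig : finType) (n m : nat).
Variables (A : Sig -> 'M[R]_n) (B : Sig -> 'M[R]_(n, m)).
Implicit Types (Psi : controller R Sig n m) (sigma : nat -> Sig) (x : 'cV[R]_n).
Local Open Scope ereal_scope.

Lemma enorm_le_cost x Psi sigma : (enorm x)%:E <= cost A B x Psi sigma.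
Proof.
apply: le_trans (nneseries_lim_ge 1 _); last by move=> k _ _; rewrite lee_fin enorm_ge0.
by rewrite big_nat1 phi0.
Qed.

Lemma cost_le_geometric {x Psi sigma} {C g : R} : (0 <= g)%R -> (g < 1)%R ->
  (forall k, enorm (phi A B k sigma x Psi) <= C * g ^+ k * enorm x)%R ->
  cost A B x Psi sigma <= (C / (1 - g) * enorm x)%:E.
Proof.
move=> g0 g1 phi_le; apply: nneseries_le_EFin => [k|N]; first exact: enorm_ge0.
have Cx0 : (0 <= C * enorm x)%R.
  by have := le_trans (enorm_ge0 _) (phi_le 0%N); rewrite expr0 mulr1.
apply: le_trans (ler_sum _ (fun k _ => phi_le k)) _.
rewrite (eq_bigr (fun k => C * enorm x * g ^+ k)%R); last by move=> k _; ring.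
by rewrite mulrAC; exact: geometric_partial_le.
Qed.

Lemma cost_superpose s0 {a1 a2 : R} {Psi1 Psi2 x1 x2 sigma} {b1 b2 : R} :
  cost A B x1 Psi1 sigma <= b1%:E -> cost A B x2 Psi2 sigma <= b2%:E ->
  cost A B (a1 *: x1 + a2 *: x2) (superpose A B s0 a1 a2 Psi1 Psi2 x1 x2) sigma
    <= (`|a1| * b1 + `|a2| * b2)%:E.
Proof.
move=> cost1_le cost2_le; rewrite /cost.
apply: le_trans.
  apply: (@lee_nneseries _ _ (fun k =>
      `|a1|%:E * (enorm (phi A B k sigma x1 Psi1))%:E +
      `|a2|%:E * (enorm (phi A B k sigma x2 Psi2))%:E)) => [k _ _|k _].
    by rewrite lee_fin enorm_ge0.
  by rewrite phi_superpose -!EFinM -EFinD lee_fin -!enormZ enormD.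
rewrite nneseriesD; try by move=> k _ _; rewrite -EFinM lee_fin mulr_ge0 ?enorm_ge0.
rewrite !nneseriesZl; try by move=> k _; rewrite lee_fin enorm_ge0.
by rewrite EFinD !EFinM; apply: leeD; apply: lee_wpmul2l.
Qed.

Lemma Vext_le_cost {x Psi} {b : R} :
  (forall sigma, cost A B x Psi sigma <= b%:E) -> Vext A B x <= b%:E.
Proof.
move=> cost_le; apply: ge_ereal_inf; exists (ereal_sup (range (cost A B x Psi))).
  by exists Psi.
by apply: ge_ereal_sup => _ [sigma _ <-]; exact: cost_le.
Qed.

Variable s0 : Sig.

Lemma enorm_le_Vext x : (enorm x)%:E <= Vext A B x.
Proof.
apply: le_ereal_inf_tmp => _ [Psi _ <-].
apply: le_ereal_sup_tmp; exists (cost A B x Psi (fun=> s0)); first by exists (fun=> s0).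
exact: enorm_le_cost.
Qed.

Hypothesis VextE : forall x, Vext A B x = (V A B x)%:E.

Lemma cost_le_V_add x {e : R} : (0 < e)%R ->
  exists Psi, forall sigma, cost A B x Psi sigma <= (V A B x + e)%:E.
Proof.
move=> e_gt0; have : Vext A B x < (V A B x + e)%:E by rewrite VextE lte_fin ltrDl.
case/ereal_inf_lt => _ [Psi _ <-] sup_lt; exists Psi => sigma.
by apply: le_trans (ltW sup_lt); apply: ereal_sup_ubound; exists sigma.
Qed.

Lemma V_sublinear (a1 a2 : R) x1 x2 :
  (V A B (a1 *: x1 + a2 *: x2) <= `|a1| * V A B x1 + `|a2| * V A B x2)%R.
Proof.
apply/ler_addgt0Pr => e e_gt0.
pose c : R := (`|a1| + `|a2|)%R.
have c1_gt0 : (0 < c + 1)%R by rewrite ltr_wpDl // addr_ge0.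
pose d : R := (e / (c + 1))%R.
have d_gt0 : (0 < d)%R by rewrite divr_gt0.
have cd_le : (c * d <= e)%R.
  by rewrite /d mulrA ler_pdivrMr // mulrDr mulr1 mulrC lerDl ltW.
have [Psi1 cost1_le] := cost_le_V_add x1 d_gt0.
have [Psi2 cost2_le] := cost_le_V_add x2 d_gt0.
have := Vext_le_cost (fun sigma => cost_superpose s0 (cost1_le sigma) (cost2_le sigma)).
move=> /(_ a1 a2); rewrite VextE lee_fin => /le_trans; apply.
by move: cd_le; rewrite /c; lra.
Qed.

End ValueFunction.

Arguments cost_le_geometric {R Sig n m A B x Psi sigma C g}.
Arguments Vext_le_cost {R Sig n m A B x Psi b}.
Arguments enorm_le_Vext {R Sig n m A B}.
Arguments V_sublinear {R Sig n m A B}.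

Theorem mainTheorem3 (R : realType) (Sig : finType) (n m : nat)
  (A : Sig -> 'M[R]_n) (B : Sig -> 'M[R]_(n, m))
  (Psi : controller R Sig n m) (C gamma : R) :
  (0 < #|Sig|)%N -> 1 < C -> 0 <= gamma -> gamma < 1 ->
  (forall (x0 : 'cV[R]_n) (sigma : nat -> Sig) (k : nat),
      enorm (phi A B k sigma x0 Psi) <= C * gamma ^+ k * enorm x0) ->
  (forall x0 : 'cV[R]_n,
      ((enorm x0)%:E <= Vext A B x0)%E /\
      (Vext A B x0 <= (C / (1 - gamma) * enorm x0)%:E)%E) /\
  V A B 0 = 0 /\
  (forall x : 'cV[R]_n, x != 0 -> 0 < V A B x) /\
  (forall (l : R) (x : 'cV[R]_n), V A B (l *: x) = `|l| * V A B x) /\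
  (forall x y : 'cV[R]_n, V A B (x + y) <= V A B x + V A B y) /\
  (forall (x y : 'cV[R]_n) (t : R), 0 <= t -> t <= 1 ->
      V A B (t *: x + (1 - t) *: y) <= t * V A B x + (1 - t) * V A B y) /\
  continuous (V A B).
Proof.
move=> /card_gt0P[s0 _] C_gt1 gamma_ge0 gamma_lt1 Psi_stable.
pose K := C / (1 - gamma).
have K_ge0 : 0 <= K by rewrite divr_ge0 ?subr_ge0 ?ltW // (lt_trans ltr01 C_gt1).
have Vext_bounds x : ((enorm x)%:E <= Vext A B x)%E /\ (Vext A B x <= (K * enorm x)%:E)%E.
  split; first exact: enorm_le_Vext.
  apply: Vext_le_cost => sigma.
  exact: cost_le_geometric gamma_ge0 gamma_lt1 (Psi_stable x sigma).
have VextE x : Vext A B x = (V A B x)%:E.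
  by rewrite /V; case: (Vext_bounds x); case: (Vext A B x).
have V_ge x : enorm x <= V A B x by case: (Vext_bounds x); rewrite VextE lee_fin.
have V_le x : V A B x <= K * enorm x by case: (Vext_bounds x); rewrite VextE lee_fin.
have V_sub := V_sublinear s0 VextE.
have V_lipschitz x y : `|V A B x - V A B y| <= K * Num.sqrt n%:R * `|x - y|.
  have := @subadditive_dist_le _ _ _ (fun z => K * enorm z)
    (sublinear_subadditive V_sub) V_le (fun z => congr1 _ (enormN z)) x y.
  by move/le_trans; apply; rewrite -mulrA ler_wpM2l // enorm_le_mx_norm.
split; first exact: Vext_bounds.
split; first exact: sublinear0 V_sub.
split; first by move=> x /enorm_gt0/lt_le_trans; apply.
split; first exact: sublinear_homogeneous V_sub.
split; first exact: sublinear_subadditive V_sub.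
split; first exact: sublinear_convex V_sub.
by apply: lipschitz_continuous V_lipschitz; rewrite mulr_ge0 ?sqrtr_ge0.
Qed.
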